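(* Suppose that at the unconstrained Nash equilibrium only SP 2's constraint is violated, i.e., $B_{1,S}^{\text{NE}}\ge B_{1,S}^0$ and $B_{2,S}^{\text{NE}}<B_{2,S}^0$. Then the Nash equilibrium with the regulatory constraints is of one of the following two types: Type I. Both SPs allocate exactly the required amount to small-cells, i.e., $B_{1,S}=B_{1,S}^0$, $B_{2,S}=B_{2,S}^0$. Type II. Only SP 2 allocates exactly the required minimum amount of bandwidth to small-cells, i.e., $B_{1,S}>B_{1,S}^0$, $B_{2,S}=B_{2,S}^0$.
   Context: Two competing service providers (SPs), $i=1,2$, each have total licensed bandwidth $B_i$, split into macro-cell bandwidth $B_{i,M}$ and small-cell bandwidth $B_{i,S}$ with $B_{i,M}+B_{i,S}\le B_i$, $B_{i,M}\ge 0$, and regulatory constraint $B_{i,S}\ge B_{i,S}^0$. Macro-cells of SP $i$ provide rate $B_{i,M}R_0$, small-cells provide rate $\lambda_S B_{i,S}R_0$ with $\lambda_S>1$. Mobile users (density $N_m$) can only use macro-cells (with priority); fixed users (density $N_f$) can use macro- or small-cells of either SP. All users have utility $u(r)=r^{1-\alpha}/(1-\alpha)$, $\alpha\in(0,1)$, with demand $D(p)=(1/p)^{1/\alpha}$ at price $p$ per unit rate; users choose the lowest-priced service and fill its capacity. Each SP maximizes its revenue $p_{i,M}K_{i,M}D(p_{i,M})+p_{i,S}K_{i,S}D(p_{i,S})$ in a two-stage game: bandwidth splits first, then prices; the price equilibrium for any fixed bandwidth allocation is the market-clearing price. Without the regulatory constraints there is a unique Nash equilibrium with $B_{i,S}^{\text{NE}}=\frac{N_f\lambda_S^{1/\alpha-1}B_i}{N_f\lambda_S^{1/\alpha-1}+N_m}$,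 $B_{i,M}^{\text{NE}}=\frac{N_mB_i}{N_f\lambda_S^{1/\alpha-1}+N_m}$; with the constraints a Nash equilibrium exists and is unique. *)

From Stdlib Require Import Reals.
Open Scope R_scope.

(* Market-clearing price of a pool of users of density N sharing a total
   capacity C : the p with N * D(p) = C, i.e. p = (N/C)^alpha. *)
Definition clearing_price (alpha N C : R) : R := Rpower (N / C) alpha.

(* Total macro capacity CM = (B1M+B2M) R0, total small-cell capacity
   CS = lam (B1S+B2S) R0.
   - If N_m / CM >= N_f / CS (written without division: N_f CM <= N_m CS),
     mobile users clear the macro market at pM = (N_m/CM)^alpha and fixed users
     clear the small-cell market at pS = (N_f/CS)^alpha (pM >= pS, so fixed users
     indeed prefer small cells).
   - Otherwise fixed users also use macro-cells and a single price
     p = ((N_m+N_f)/(CM+CS))^alpha clears the whole market.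
   Revenue = price * (rate sold) = price * capacity (every capacity is filled). *)
Definition revenue (Nm Nf lam alpha R0 : R) (BiM BiS BjM BjS : R) : R :=
  let CM := (BiM + BjM) * R0 in
  let CS := lam * (BiS + BjS) * R0 in
  if Rle_dec (Nf * CM) (Nm * CS) then
    clearing_price alpha Nm CM * (BiM * R0) + clearing_price alpha Nf CS * (lam * BiS * R0)
  else
    clearing_price alpha (Nm + Nf) (CM + CS) * (BiM * R0 + lam * BiS * R0).

Definition feasible (Bi BiS0 BiM BiS : R) : Prop :=
  0 <= BiM /\ BiS0 <= BiS /\ BiM + BiS <= Bi.

Definition constrained_NE (Nm Nf lam alpha R0 B1 B2 B1S0 B2S0 : R)
  (B1M B1S B2M B2S : R) : Prop :=
  feasible B1 B1S0 B1M B1S /\ feasible B2 B2S0 B2M B2S /\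
  (forall B1M' B1S', feasible B1 B1S0 B1M' B1S' ->
     revenue Nm Nf lam alpha R0 B1M' B1S' B2M B2S
     <= revenue Nm Nf lam alpha R0 B1M B1S B2M B2S) /\
  (forall B2M' B2S', feasible B2 B2S0 B2M' B2S' ->
     revenue Nm Nf lam alpha R0 B2M' B2S' B1M B1S
     <= revenue Nm Nf lam alpha R0 B2M B2S B1M B1S).

Definition BS_NE (Nm Nf lam alpha Bi : R) : R :=
  Nf * Rpower lam (1 / alpha - 1) * Bi / (Nf * Rpower lam (1 / alpha - 1) + Nm).

(* At a constrained equilibrium SP 2 uses exactly its small-cell minimum. Suppose
   it kept slack small-cell bandwidth. If fixed users also buy macro capacity (a
   pooled market), moving bandwidth from macro- to small-cells enlarges the pool
   at a price loss of relative order [alpha], which pays off for whichever SP owns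
   macro bandwidth; if no one owns macro bandwidth, a sliver of it sells at an
   unbounded price. So the markets are segmented, and the marginal gain of SP i
   from shifting small -> macro is [u (X - alpha m_i) - v (Y - alpha s_i)], with
   [u = p_M / X] and [v = lam p_S / Y]. On the segmentation boundary [p_M = p_S]
   makes it negative for every SP owning macro bandwidth. Strictly inside, SP 2's
   slack makes its gain vanish, and the first-order conditions yield
   [v s_2 <= u m_2] and [u m_1 <= v s_1]. Writing [Nf_eff = Nf lam^(1/alpha - 1)],
   SP 2's slack gives [Nf_eff m_2 < Nm s_2], while SP 1 either sits at its minimum,
   where [B1S0 <= BS_NE B1] gives [Nm s_1 <= Nf_eff m_1], or has zero marginal
   gain, which balances the prices ([p_M = lam p_S]) and forces
   [Nm s_1 = Nf_eff m_1]. These four inequalities are incompatible. *)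

From Stdlib Require Import Reals Lra Psatz.
From Coquelicot Require Import Coquelicot.
Open Scope R_scope.

Lemma ln_le_sub_1 z : 0 < z -> ln z <= z - 1.
Proof. intro Hz. pose proof (exp_ineq1_le (ln z)) as H. rewrite exp_ln in H; lra. Qed.

Lemma clearing_price_pos a N C : 0 < clearing_price a N C.
Proof. apply exp_pos. Qed.

Lemma clearing_price_antitone a N C C' :
  0 <= a -> 0 < N -> 0 < C <= C' -> clearing_price a N C' <= clearing_price a N C.
Proof.
  intros Ha HN HC. apply Rle_Rpower_l; [exact Ha|]. split.
  - apply Rdiv_lt_0_compat; lra.
  - apply Rmult_le_compat_l; [lra|]. apply Rinv_le_contravar; lra.
Qed.

(* Tangent line of the convex map [C |-> (N / C) ^ a] at [C]. *)
Lemma clearing_price_tangent a N C C' :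
  0 <= a -> 0 < N -> 0 < C -> 0 < C' ->
  clearing_price a N C * (1 - a * (C' - C) / C) <= clearing_price a N C'.
Proof.
  intros Ha HN HC HC'. unfold clearing_price.
  replace (N / C') with (N / C * (C / C')) by (field; lra).
  rewrite <- Rpower_mult_distr by (apply Rdiv_lt_0_compat; lra).
  apply Rmult_le_compat_l; [left; apply exp_pos|].
  replace (C / C') with (/ (C' / C)) by (field; lra).
  unfold Rpower. rewrite ln_Rinv by (apply Rdiv_lt_0_compat; lra).
  pose proof (exp_ineq1_le (a * - ln (C' / C))).
  pose proof (ln_le_sub_1 (C' / C) ltac:(apply Rdiv_lt_0_compat; lra)).
  replace (a * (C' - C) / C) with (a * (C' / C - 1)) by (field; lra).
  nra.
Qed.

Lemma clearing_price_gt a N C M :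
  0 < a -> 0 < N -> 0 < C -> 0 < M -> C * Rpower M (/ a) < N ->
  M < clearing_price a N C.
Proof.
  intros Ha HN HC HM Hlt. unfold clearing_price.
  rewrite <- (Rpower_1 M) at 1 by exact HM.
  replace 1 with (/ a * a) by (field; lra). rewrite <- Rpower_mult.
  apply Rlt_Rpower_l; [exact Ha|]. split; [apply exp_pos|].
  apply Rmult_lt_reg_r with C; [exact HC|].
  replace (N / C * C) with N by (field; lra). lra.
Qed.

Lemma clearing_price_ratio a N C N' C' k :
  0 < a -> 0 < N -> 0 < C -> 0 < N' -> 0 < C' -> 0 < k ->
  clearing_price a N C = k * clearing_price a N' C' ->
  N * C' = Rpower k (/ a) * N' * C.
Proof.
  intros Ha HN HC HN' HC' Hk Heq. unfold clearing_price in Heq.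
  apply (f_equal (fun p => Rpower p (/ a))) in Heq.
  rewrite <- Rpower_mult_distr, !Rpower_mult in Heq
    by (apply exp_pos || lra).
  replace (a * / a) with 1 in Heq by (field; lra).
  rewrite !Rpower_1 in Heq by (apply Rdiv_lt_0_compat; lra).
  replace N with (N / C * C) at 1 by (field; lra).
  rewrite Heq. field. lra.
Qed.

Lemma clearing_revenue_lt_add a N T c delta :
  0 < a < 1 -> 0 < N -> 0 < T -> 0 <= c <= T -> 0 < delta ->
  a * delta < (1 - a) * T ->
  clearing_price a N T * c < clearing_price a N (T + delta) * (c + delta).
Proof.
  intros Ha HN HT Hc Hd Hsmall.
  pose proof (clearing_price_tangent a N T (T + delta) ltac:(lra) HN HT ltac:(lra)) as Htan.
  pose proof (clearing_price_pos a N T) as Hp.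
  replace (a * (T + delta - T) / T) with (a * delta / T) in Htan by (field; lra).
  apply Rlt_le_trans with (clearing_price a N T * (1 - a * delta / T) * (c + delta));
    [|apply Rmult_le_compat_r; lra].
  assert (Hgain : 0 < (1 - a * delta / T) * (c + delta) - c).
  { replace ((1 - a * delta / T) * (c + delta) - c)
      with (delta * ((T - a * c) - a * delta) / T) by (field; lra).
    assert (a * c <= a * T) by (apply Rmult_le_compat_l; lra).
    apply Rdiv_lt_0_compat; [apply Rmult_lt_0_compat|]; lra. }
  rewrite Rmult_assoc. apply Rmult_lt_compat_l; lra.
Qed.

Lemma at_right_0_affine_lt p q r :
  p < r -> at_right 0 (fun d => 0 < d /\ p + d * q < r).
Proof.
  intro Hpr.
  assert (Hgap : locally 0 (fun d => 0 < r - (p + d * q))).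
  { assert (Hcont : continuous (fun d => r - (p + d * q)) 0).
    { apply (ex_derive_continuous (K := R_AbsRing) (V := R_NormedModule)).
      auto_derive. easy. }
    apply (Hcont (fun y => 0 < y)).
    apply (locally_open (fun y => 0 < y)); [apply open_gt | now intros | lra]. }
  unfold at_right, within. revert Hgap; apply filter_imp.
  intros d Hd Hpos; split; lra.
Qed.

Lemma segmented_marginal_signs a u v m1 s1 m2 s2 :
  0 < a < 1 -> 0 < u -> 0 < v ->
  0 <= m1 -> 0 <= s1 -> 0 <= m2 -> 0 < s2 -> 0 < m1 + m2 ->
  (0 < m1 -> 0 <= u * (m1 + m2 - a * m1) - v * (s1 + s2 - a * s1)) ->
  (0 < m2 -> 0 <= u * (m1 + m2 - a * m2) - v * (s1 + s2 - a * s2)) ->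
  u * (m1 + m2 - a * m2) - v * (s1 + s2 - a * s2) <= 0 ->
  0 < m2 /\ u * m1 <= v * s1 /\ v * s2 <= u * m2.
Proof.
  intros Ha Hu Hv Hm1 Hs1 Hm2 Hs2 HX F1 F2 S2.
  set (A := u * m1 - v * s1) in *. set (Z := u * m2 - v * s2) in *.
  assert (HD1 : u * (m1 + m2 - a * m1) - v * (s1 + s2 - a * s1) = (1 - a) * A + Z)
    by (unfold A, Z; ring).
  assert (HD2 : u * (m1 + m2 - a * m2) - v * (s1 + s2 - a * s2) = A + (1 - a) * Z)
    by (unfold A, Z; ring).
  rewrite HD1 in F1. rewrite HD2 in F2, S2.
  destruct (Rle_lt_or_eq_dec 0 m2 Hm2) as [Hm2p | Hm20].
  - specialize (F2 Hm2p).
    assert (HAZ : A = - (1 - a) * Z) by lra.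
    destruct (Rle_lt_or_eq_dec 0 m1 Hm1) as [Hm1p | Hm10].
    + specialize (F1 Hm1p). rewrite HAZ in F1.
      replace ((1 - a) * (- (1 - a) * Z) + Z) with (a * (2 - a) * Z) in F1 by ring.
      assert (0 <= Z).
      { apply (Rmult_le_reg_l (a * (2 - a))); [nra | lra]. }
      split; [exact Hm2p|]. unfold A, Z in *. nra.
    + assert (A <= 0) by (unfold A; rewrite <- Hm10; nra).
      split; [exact Hm2p|]. unfold A, Z in *. nra.
  - exfalso. assert (HZ : Z < 0) by (unfold Z; rewrite <- Hm20; nra).
    specialize (F1 ltac:(lra)).
    assert ((1 - a) * (A + (1 - a) * Z) <= (1 - a) * 0) by (apply Rmult_le_compat_l; lra).
    assert (0 <= a * (2 - a) * Z) by lra.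
    assert (0 < a * (2 - a)) by nra.
    nra.
Qed.

Lemma segmented_marginal_balance a u v m1 s1 m2 s2 :
  0 < a < 1 -> 0 < u -> 0 < v -> 0 <= m1 -> 0 < s1 -> 0 < m2 ->
  (0 < m1 -> 0 <= u * (m1 + m2 - a * m1) - v * (s1 + s2 - a * s1)) ->
  u * (m1 + m2 - a * m1) - v * (s1 + s2 - a * s1) <= 0 ->
  u * (m1 + m2 - a * m2) - v * (s1 + s2 - a * s2) = 0 ->
  0 < m1 /\ m1 * (s1 + s2) = s1 * (m1 + m2) /\ u * (m1 + m2) = v * (s1 + s2).
Proof.
  intros Ha Hu Hv Hm1 Hs1 Hm2 F1 S1 E2.
  set (A := u * m1 - v * s1). set (Z := u * m2 - v * s2).
  assert (HD1 : u * (m1 + m2 - a * m1) - v * (s1 + s2 - a * s1) = (1 - a) * A + Z)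
    by (unfold A, Z; ring).
  assert (HD2 : u * (m1 + m2 - a * m2) - v * (s1 + s2 - a * s2) = A + (1 - a) * Z)
    by (unfold A, Z; ring).
  rewrite HD1 in F1, S1. rewrite HD2 in E2.
  destruct (Rle_lt_or_eq_dec 0 m1 Hm1) as [Hm1p | Hm10].
  - specialize (F1 Hm1p).
    assert (HAZ : a * (Z - A) = 0) by lra.
    assert (HA : A = Z) by (apply Rmult_integral in HAZ; destruct HAZ; lra).
    assert (HA0 : A = 0) by nra.
    assert (Hm1s : u * m1 = v * s1) by (unfold A in HA0; lra).
    assert (Hm2s : u * m2 = v * s2) by (unfold A, Z in *; lra).
    split; [exact Hm1p|]. split; [|lra].
    apply Rmult_eq_reg_l with u; [|lra].
    replace (u * (m1 * (s1 + s2))) with (u * m1 * (s1 + s2)) by ring.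
    replace (u * (s1 * (m1 + m2))) with (s1 * (u * m1) + s1 * (u * m2)) by ring.
    rewrite Hm1s, Hm2s. ring.
  - exfalso. assert (A < 0) by (unfold A; rewrite <- Hm10; nra).
    assert ((1 - a) * ((1 - a) * A + Z) <= (1 - a) * 0) by (apply Rmult_le_compat_l; lra).
    assert (a * (2 - a) * A >= 0) by lra.
    assert (0 < a * (2 - a)) by nra.
    nra.
Qed.

Lemma boundary_marginal_absurd a u v m1 s1 m2 s2 :
  0 < a < 1 -> 0 < u -> 0 < v ->
  0 <= m1 -> 0 <= s1 -> 0 <= m2 -> 0 <= s2 -> 0 < m1 + m2 ->
  u * (m1 + m2) < v * (s1 + s2) ->
  (0 < m1 -> 0 <= u * (m1 + m2 - a * m1) - v * (s1 + s2 - a * s1)) ->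
  (0 < m2 -> 0 <= u * (m1 + m2 - a * m2) - v * (s1 + s2 - a * s2)) ->
  False.
Proof.
  intros Ha Hu Hv Hm1 Hs1 Hm2 Hs2 HX HW F1 F2.
  set (A := u * m1 - v * s1) in *. set (Z := u * m2 - v * s2) in *.
  assert (HD1 : u * (m1 + m2 - a * m1) - v * (s1 + s2 - a * s1) = (1 - a) * (A + Z) + a * Z)
    by (unfold A, Z; ring).
  assert (HD2 : u * (m1 + m2 - a * m2) - v * (s1 + s2 - a * s2) = (1 - a) * (A + Z) + a * A)
    by (unfold A, Z; ring).
  assert (HAZ : A + Z < 0) by (unfold A, Z; lra).
  assert (HW' : (1 - a) * (A + Z) < 0) by (apply Rmult_pos_neg; lra).
  rewrite HD1 in F1. rewrite HD2 in F2.
  destruct (Rle_lt_or_eq_dec 0 m1 Hm1) as [Hm1p | Hm10];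
  destruct (Rle_lt_or_eq_dec 0 m2 Hm2) as [Hm2p | Hm20].
  - specialize (F1 Hm1p). specialize (F2 Hm2p). nra.
  - specialize (F1 Hm1p). assert (Z <= 0) by (unfold Z; rewrite <- Hm20; nra). nra.
  - specialize (F2 Hm2p). assert (A <= 0) by (unfold A; rewrite <- Hm10; nra). nra.
  - lra.
Qed.

Section BandwidthGame.

Variables Nm Nf lam a R0 : R.
Hypotheses (HNm : 0 < Nm) (HNf : 0 < Nf) (Hlam : 1 < lam) (Ha : 0 < a < 1)
  (HR0 : 0 < R0).

Local Notation rev := (revenue Nm Nf lam a R0).
Local Notation pM X := (clearing_price a Nm (X * R0)).
Local Notation pS Y := (clearing_price a Nf (lam * Y * R0)).

(* Fixed users buy only small-cell capacity: the first branch of [revenue]. *)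
Definition segmented (X Y : R) : Prop := Nf * (X * R0) <= Nm * (lam * Y * R0).

Definition best_response (B B0 m s m' s' : R) : Prop :=
  forall m1 s1, feasible B B0 m1 s1 -> rev m1 s1 m' s' <= rev m s m' s'.

Definition macro_slope (X : R) : R := pM X / X.
Definition small_slope (Y : R) : R := lam * pS Y / Y.

Lemma macro_slope_pos X : 0 < X -> 0 < macro_slope X.
Proof. intro HX. apply Rdiv_lt_0_compat; [apply clearing_price_pos | exact HX]. Qed.

Lemma small_slope_pos Y : 0 < Y -> 0 < small_slope Y.
Proof.
  intro HY. apply Rdiv_lt_0_compat; [|exact HY].
  apply Rmult_lt_0_compat; [lra | apply clearing_price_pos].
Qed.

(* Derivative, divided by [R0], of the revenue [rev m s m' s'] of a segmented
   market along the shift small -> macro, where [X = m + m'] and [Y = s + s']. *)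
Definition macro_marginal (m s X Y : R) : R :=
  macro_slope X * (X - a * m) - small_slope Y * (Y - a * s).

Lemma revenue_segmented m s m' s' :
  segmented (m + m') (s + s') ->
  rev m s m' s' = pM (m + m') * (m * R0) + pS (s + s') * (lam * s * R0).
Proof. intro H. unfold revenue. destruct Rle_dec; [reflexivity | contradiction]. Qed.

Lemma revenue_pooled m s m' s' :
  ~ segmented (m + m') (s + s') ->
  rev m s m' s' = clearing_price a (Nm + Nf) ((m + m') * R0 + lam * (s + s') * R0)
                  * (m * R0 + lam * s * R0).
Proof. intro H. unfold revenue. destruct Rle_dec; [contradiction | reflexivity]. Qed.

Lemma revenue_shift_ge m s m' s' X Y d :
  X = m + m' -> Y = s + s' -> 0 < X -> 0 < Y -> 0 <= m + d -> 0 <= s - d ->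
  0 < X + d -> 0 < Y - d -> segmented X Y -> segmented (X + d) (Y - d) ->
  rev m s m' s' + d * R0 * (macro_marginal m s X Y - d * a * (macro_slope X + small_slope Y))
  <= rev (m + d) (s - d) m' s'.
Proof.
  intros -> -> HX HY Hm Hs HXd HYd Hseg Hseg'.
  rewrite revenue_segmented by exact Hseg.
  rewrite revenue_segmented
    by (replace (m + d + m') with (m + m' + d) by ring;
        replace (s - d + s') with (s + s' - d) by ring; exact Hseg').
  replace (m + d + m') with (m + m' + d) by ring.
  replace (s - d + s') with (s + s' - d) by ring.
  pose proof (clearing_price_tangent a Nm ((m + m') * R0) ((m + m' + d) * R0)
    ltac:(lra) HNm ltac:(nra) ltac:(nra)) as HtanM.
  pose proof (clearing_price_tangent a Nf (lam * (s + s') * R0) (lam * (s + s' - d) * R0)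
    ltac:(lra) HNf ltac:(apply Rmult_lt_0_compat; nra) ltac:(apply Rmult_lt_0_compat; nra))
    as HtanS.
  replace (a * ((m + m' + d) * R0 - (m + m') * R0) / ((m + m') * R0))
    with (a * d / (m + m')) in HtanM by (field; lra).
  replace (a * (lam * (s + s' - d) * R0 - lam * (s + s') * R0) / (lam * (s + s') * R0))
    with (- (a * d / (s + s'))) in HtanS by (field; lra).
  apply Rle_trans with (pM (m + m') * (1 - a * d / (m + m')) * ((m + d) * R0)
    + pS (s + s') * (1 - - (a * d / (s + s'))) * (lam * (s - d) * R0)).
  - apply Req_le. unfold macro_marginal, macro_slope, small_slope. field. lra.
  - apply Rplus_le_compat; apply Rmult_le_compat_r; try assumption.
    + nra.
    + apply Rmult_le_pos; [|lra]. apply Rmult_le_pos; lra.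
Qed.

Lemma best_response_no_local_gain B B0 m s m' s' (m1 s1 : R -> R) :
  best_response B B0 m s m' s' ->
  at_right 0 (fun d => feasible B B0 (m1 d) (s1 d) /\ rev m s m' s' < rev (m1 d) (s1 d) m' s') ->
  False.
Proof.
  intros BR Hnear. destruct (filter_ex _ Hnear) as [d [Hfeas Hgain]].
  specialize (BR _ _ Hfeas). lra.
Qed.

Lemma best_response_macro_marginal_ge0 B B0 m s m' s' :
  best_response B B0 m s m' s' -> feasible B B0 m s -> 0 <= s -> 0 <= m' -> 0 <= s' ->
  0 < m -> 0 < s + s' -> segmented (m + m') (s + s') ->
  0 <= macro_marginal m s (m + m') (s + s').
Proof.
  intros BR [Hm [HsB HB]] Hs Hm' Hs' Hmpos HY Hseg.
  apply Rnot_lt_le; intro Hneg.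
  set (S := macro_slope (m + m') + small_slope (s + s')).
  apply (best_response_no_local_gain B B0 m s m' s' (fun d => m - d) (fun d => s + d) BR).
  generalize (filter_and _ _ (at_right_0_affine_lt 0 1 m Hmpos)
                (at_right_0_affine_lt _ (a * S) 0 Hneg)).
  apply filter_imp; intros d [[Hd Hdm] [_ Hslope]].
  split; [unfold feasible; lra|].
  assert (Hseg' : segmented (m + m' + - d) (s + s' - - d)).
  { unfold segmented in *.
    assert (0 <= Nf * (d * R0)) by (apply Rmult_le_pos; nra).
    assert (0 <= Nm * (lam * d * R0)) by (apply Rmult_le_pos; [lra | apply Rmult_le_pos; nra]).
    nra. }
  pose proof (revenue_shift_ge m s m' s' _ _ (- d) eq_refl eq_refl ltac:(lra) HY
    ltac:(lra) ltac:(lra) ltac:(lra) ltac:(lra) Hseg Hseg') as Hshift.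
  replace (m + - d) with (m - d) in Hshift by ring.
  replace (s - - d) with (s + d) in Hshift by ring.
  fold S in Hshift.
  assert (0 < - d * R0 * (macro_marginal m s (m + m') (s + s') - - d * a * S)).
  { replace (- d * R0 * (macro_marginal m s (m + m') (s + s') - - d * a * S))
      with (d * R0 * - (macro_marginal m s (m + m') (s + s') + d * (a * S))) by ring.
    apply Rmult_lt_0_compat; [apply Rmult_lt_0_compat|]; lra. }
  lra.
Qed.

Lemma best_response_macro_marginal_le0 B B0 m s m' s' :
  best_response B B0 m s m' s' -> feasible B B0 m s -> 0 <= B0 -> 0 <= s' ->
  B0 < s -> 0 < m + m' -> Nf * ((m + m') * R0) < Nm * (lam * (s + s') * R0) ->
  macro_marginal m s (m + m') (s + s') <= 0.
Proof.
  intros BR [Hm [HsB HB]] HB0 Hs' Hslack HX Hstrict.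
  apply Rnot_lt_le; intro Hpos.
  set (S := macro_slope (m + m') + small_slope (s + s')).
  apply (best_response_no_local_gain B B0 m s m' s' (fun d => m + d) (fun d => s - d) BR).
  assert (Hroom : 0 < s - B0) by lra.
  generalize (filter_and _ _ (at_right_0_affine_lt 0 1 (s - B0) Hroom)
    (filter_and _ _ (at_right_0_affine_lt _ (Nf * R0 + Nm * (lam * R0)) _ Hstrict)
                    (at_right_0_affine_lt 0 (a * S) _ Hpos))).
  apply filter_imp; intros d [[Hd Hds] [[_ Hregion] [_ Hslope]]].
  split; [unfold feasible; lra|].
  assert (Hseg' : segmented (m + m' + d) (s + s' - d))
    by (unfold segmented; nra).
  pose proof (revenue_shift_ge m s m' s' _ _ d eq_refl eq_refl HX ltac:(lra)
    ltac:(lra) ltac:(lra) ltac:(lra) ltac:(lra) ltac:(unfold segmented; lra) Hseg') as Hshift.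
  fold S in Hshift.
  assert (0 < d * R0 * (macro_marginal m s (m + m') (s + s') - d * a * S)).
  { apply Rmult_lt_0_compat; [apply Rmult_lt_0_compat|]; lra. }
  lra.
Qed.

Lemma best_response_segmented_full B B0 m s m' s' :
  best_response B B0 m s m' s' -> feasible B B0 m s -> 0 <= s -> 0 < s' ->
  segmented (m + m') (s + s') -> m + s = B.
Proof.
  intros BR [Hm [HsB HB]] Hs Hs' Hseg.
  apply Rle_antisym; [exact HB|]. apply Rnot_lt_le; intro Hroom.
  assert (Hroom' : 0 < B - (m + s)) by lra.
  assert (Hcap : 0 < (1 - a) * (lam * (s + s') * R0))
    by (apply Rmult_lt_0_compat; [lra | apply Rmult_lt_0_compat; nra]).
  apply (best_response_no_local_gain B B0 m s m' s' (fun _ => m) (fun d => s + d) BR).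
  generalize (filter_and _ _ (at_right_0_affine_lt 0 1 _ Hroom')
                (at_right_0_affine_lt 0 (a * (lam * R0)) _ Hcap)).
  apply filter_imp; intros d [[Hd Hdroom] [_ Hsmall]].
  split; [unfold feasible; lra|].
  assert (Hseg' : segmented (m + m') (s + d + s')).
  { unfold segmented in *.
    assert (0 <= Nm * (lam * d * R0)) by (apply Rmult_le_pos; [lra | apply Rmult_le_pos; nra]).
    nra. }
  rewrite (revenue_segmented m s), (revenue_segmented m (s + d)) by assumption.
  apply Rplus_lt_compat_l.
  replace (lam * (s + d + s') * R0) with (lam * (s + s') * R0 + lam * d * R0) by ring.
  replace (lam * (s + d) * R0) with (lam * s * R0 + lam * d * R0) by ring.
  apply clearing_revenue_lt_add; try lra.
  - apply Rmult_lt_0_compat; nra.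
  - split; [apply Rmult_le_pos; nra|]. apply Rmult_le_compat_r; nra.
  - apply Rmult_lt_0_compat; nra.
Qed.

Lemma best_response_pooled_absurd B B0 m s m' s' :
  best_response B B0 m s m' s' -> feasible B B0 m s -> 0 <= s -> 0 <= m' -> 0 <= s' ->
  0 < m -> ~ segmented (m + m') (s + s') -> False.
Proof.
  intros BR [Hm [HsB HB]] Hs Hm' Hs' Hmpos Hpool.
  assert (Hgap := Rnot_le_lt _ _ Hpool).
  set (T := (m + m') * R0 + lam * (s + s') * R0).
  assert (HT : 0 < T).
  { assert (0 <= lam * (s + s') * R0) by (apply Rmult_le_pos; nra). unfold T; nra. }
  assert (Hcap : 0 < (1 - a) * T) by (apply Rmult_lt_0_compat; lra).
  apply (best_response_no_local_gain B B0 m s m' s' (fun d => m - d) (fun d => s + d) BR).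
  generalize (filter_and _ _ (at_right_0_affine_lt 0 1 _ Hmpos)
    (filter_and _ _ (at_right_0_affine_lt _ (Nf * R0 + Nm * (lam * R0)) _ Hgap)
                    (at_right_0_affine_lt 0 (a * ((lam - 1) * R0)) _ Hcap))).
  apply filter_imp; intros d [[Hd Hdm] [[_ Hregion] [_ Hsmall]]].
  split; [unfold feasible; lra|].
  assert (Hpool' : ~ segmented (m - d + m') (s + d + s')) by (unfold segmented; nra).
  rewrite (revenue_pooled m s), (revenue_pooled (m - d) (s + d)) by assumption.
  replace ((m - d + m') * R0 + lam * (s + d + s') * R0) with (T + (lam - 1) * d * R0)
    by (unfold T; ring).
  replace ((m - d) * R0 + lam * (s + d) * R0)
    with ((m * R0 + lam * s * R0) + (lam - 1) * d * R0) by ring.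
  apply clearing_revenue_lt_add; try lra.
  - assert (0 <= lam * s * R0) by (apply Rmult_le_pos; nra).
    assert (0 <= lam * s' * R0) by (apply Rmult_le_pos; nra).
    unfold T; split; nra.
  - apply Rmult_lt_0_compat; [apply Rmult_lt_0_compat|]; lra.
Qed.

(* Without any macro capacity the macro price is unbounded, so moving a little
   small-cell bandwidth to the macro-cell is profitable. *)
Lemma best_response_without_macro_absurd B B0 s s' :
  best_response B B0 0 s 0 s' -> feasible B B0 0 s -> 0 <= B0 -> 0 <= s' -> B0 < s -> False.
Proof.
  intros BR [_ [HsB HB]] HB0 Hs' Hslack.
  set (Y := s + s').
  set (M := lam * pS Y).
  assert (HM : 0 < M) by (apply Rmult_lt_0_compat; [lra | apply clearing_price_pos]).
  assert (Hroom : 0 < s - B0) by lra.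
  assert (Hcap : 0 < Nm * (lam * Y * R0))
    by (apply Rmult_lt_0_compat; [lra | apply Rmult_lt_0_compat; unfold Y; nra]).
  apply (best_response_no_local_gain B B0 0 s 0 s' (fun d => d) (fun d => s - d) BR).
  generalize (filter_and _ _ (at_right_0_affine_lt 0 1 _ Hroom)
    (filter_and _ _ (at_right_0_affine_lt 0 (Nf * R0 + Nm * (lam * R0)) _ Hcap)
                    (at_right_0_affine_lt 0 (R0 * Rpower M (/ a)) _ HNm))).
  apply filter_imp; intros d [[Hd Hds] [[_ Hregion] [_ Hprice]]].
  split; [unfold feasible; lra|].
  rewrite (revenue_segmented 0 s)
    by (unfold segmented; fold Y; rewrite Rplus_0_r, Rmult_0_l, Rmult_0_r; lra).
  rewrite (revenue_segmented d (s - d))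
    by (unfold segmented; replace (s - d + s') with (Y - d) by (unfold Y; ring); lra).
  rewrite !Rplus_0_r, !Rmult_0_l.
  replace (s - d + s') with (Y - d) by (unfold Y; ring).
  assert (HpM : M < pM d).
  { apply clearing_price_gt; [lra | lra | apply Rmult_lt_0_compat; lra | exact HM | lra]. }
  assert (HYd : 0 < Y - d) by (unfold Y; lra).
  assert (HpS : pS Y <= pS (Y - d)).
  { apply clearing_price_antitone; [lra | lra | split].
    - apply Rmult_lt_0_compat; [apply Rmult_lt_0_compat|]; lra.
    - apply Rmult_le_compat_r; [lra|]. apply Rmult_le_compat_l; lra. }
  assert (M * (d * R0) < pM d * (d * R0))
    by (apply Rmult_lt_compat_r; [apply Rmult_lt_0_compat|]; lra).
  assert (pS Y * (lam * (s - d) * R0) <= pS (Y - d) * (lam * (s - d) * R0))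
    by (apply Rmult_le_compat_r; [apply Rmult_le_pos; [apply Rmult_le_pos|] | ]; lra).
  fold Y. rewrite Rmult_0_r. unfold M in *. lra.
Qed.

Local Notation Nf_eff := (Nf * Rpower lam (1 / a - 1)).
Local Notation NE := (constrained_NE Nm Nf lam a R0).

Lemma Nf_eff_pos : 0 < Nf_eff.
Proof. apply Rmult_lt_0_compat; [lra | apply exp_pos]. Qed.

Lemma le_BS_NE_ratio B x : x <= BS_NE Nm Nf lam a B -> Nm * x <= Nf_eff * (B - x).
Proof.
  unfold BS_NE. pose proof Nf_eff_pos. intro Hx.
  apply Rmult_le_compat_r with (r := Nf_eff + Nm) in Hx; [|lra].
  replace (Nf_eff * B / (Nf_eff + Nm) * (Nf_eff + Nm)) with (Nf_eff * B) in Hx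
    by (field; lra).
  lra.
Qed.

Lemma BS_NE_lt_ratio B x : BS_NE Nm Nf lam a B < x -> Nf_eff * (B - x) < Nm * x.
Proof.
  unfold BS_NE. pose proof Nf_eff_pos. intro Hx.
  apply Rmult_lt_compat_r with (r := Nf_eff + Nm) in Hx; [|lra].
  replace (Nf_eff * B / (Nf_eff + Nm) * (Nf_eff + Nm)) with (Nf_eff * B) in Hx
    by (field; lra).
  lra.
Qed.

Lemma balanced_prices_ratio X Y :
  0 < X -> 0 < Y -> pM X = lam * pS Y -> Nm * Y = Nf_eff * X.
Proof.
  intros HX HY Hprice.
  apply clearing_price_ratio in Hprice;
    try (apply Rmult_lt_0_compat; try apply Rmult_lt_0_compat); try lra.
  replace (/ a) with (1 + (1 / a - 1)) in Hprice by (field; lra).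
  rewrite Rpower_plus, Rpower_1 in Hprice by lra.
  apply Rmult_eq_reg_r with (lam * R0); [|apply Rgt_not_eq; apply Rmult_lt_0_compat; lra].
  lra.
Qed.

Lemma pooled_not_NE B1 B2 B1S0 B2S0 m1 s1 m2 s2 :
  NE B1 B2 B1S0 B2S0 m1 s1 m2 s2 -> 0 <= B1S0 -> 0 <= B2S0 ->
  ~ segmented (m1 + m2) (s1 + s2) -> False.
Proof.
  intros [F1 [F2 [BR1 BR2]]] H10 H20 Hpool.
  pose proof F1 as [Hm1 [Hs1 _]]. pose proof F2 as [Hm2 [Hs2 _]].
  destruct (Rle_lt_or_eq_dec 0 m1 Hm1) as [Hm1p | <-].
  - exact (best_response_pooled_absurd _ _ _ _ _ _ BR1 F1 ltac:(lra) Hm2 ltac:(lra) Hm1p Hpool).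
  - destruct (Rle_lt_or_eq_dec 0 m2 Hm2) as [Hm2p | <-].
    + apply (best_response_pooled_absurd _ _ _ _ _ _ BR2 F2 ltac:(lra) Hm1 ltac:(lra) Hm2p).
      rewrite Rplus_comm, (Rplus_comm s2). exact Hpool.
    + apply Hpool. unfold segmented. rewrite Rplus_0_r, Rmult_0_l, Rmult_0_r.
      apply Rmult_le_pos; [lra|]. apply Rmult_le_pos; nra.
Qed.

Lemma NE_macro_marginals_ge0 B1 B2 B1S0 B2S0 m1 s1 m2 s2 :
  NE B1 B2 B1S0 B2S0 m1 s1 m2 s2 -> 0 <= B1S0 -> 0 <= B2S0 ->
  0 < s1 + s2 -> segmented (m1 + m2) (s1 + s2) ->
  (0 < m1 -> 0 <= macro_marginal m1 s1 (m1 + m2) (s1 + s2)) /\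
  (0 < m2 -> 0 <= macro_marginal m2 s2 (m1 + m2) (s1 + s2)).
Proof.
  intros [F1 [F2 [BR1 BR2]]] H10 H20 HY Hseg.
  pose proof F1 as [Hm1 [Hs1 _]]. pose proof F2 as [Hm2 [Hs2 _]].
  split; intro Hpos.
  - exact (best_response_macro_marginal_ge0 _ _ _ _ _ _ BR1 F1 ltac:(lra) Hm2 ltac:(lra)
             Hpos HY Hseg).
  - rewrite (Rplus_comm m1), (Rplus_comm s1) in *.
    exact (best_response_macro_marginal_ge0 _ _ _ _ _ _ BR2 F2 ltac:(lra) Hm1 ltac:(lra)
             Hpos HY Hseg).
Qed.

(* On the boundary the two prices coincide, so the small-cell revenue per unit
   of bandwidth exceeds the macro one by the factor [lam]. *)
Lemma segmented_boundary_not_NE B1 B2 B1S0 B2S0 m1 s1 m2 s2 :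
  NE B1 B2 B1S0 B2S0 m1 s1 m2 s2 -> 0 <= B1S0 -> 0 <= B2S0 -> 0 < m1 + m2 ->
  Nf * ((m1 + m2) * R0) = Nm * (lam * (s1 + s2) * R0) -> False.
Proof.
  intros HNE H10 H20 HX Hbd.
  pose proof HNE as [[Hm1 [Hs1 _]] [[Hm2 [Hs2 _]] _]].
  assert (HY : 0 < s1 + s2).
  { destruct (Rle_lt_or_eq_dec 0 (s1 + s2)) as [| HY0]; [lra | lra |].
    rewrite <- HY0, Rmult_0_r, Rmult_0_l, Rmult_0_r in Hbd.
    assert (0 < Nf * ((m1 + m2) * R0)) by (apply Rmult_lt_0_compat; nra). lra. }
  destruct (NE_macro_marginals_ge0 _ _ _ _ _ _ _ _ HNE H10 H20 HY
              ltac:(unfold segmented; lra)) as [FOC1 FOC2].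
  set (X := m1 + m2) in *. set (Y := s1 + s2) in *.
  assert (Hprice : pM X = pS Y).
  { unfold clearing_price. f_equal.
    replace (Nm / (X * R0)) with (Nm * (lam * Y * R0) / (X * R0 * (lam * Y * R0)))
      by (field; repeat split; lra).
    rewrite <- Hbd. field. repeat split; lra. }
  assert (HpS := clearing_price_pos a Nf (lam * Y * R0)).
  apply (boundary_marginal_absurd a (macro_slope X) (small_slope Y) m1 s1 m2 s2);
    try assumption; try lra.
  - exact (macro_slope_pos X HX).
  - exact (small_slope_pos Y HY).
  - change (m1 + m2) with X. change (s1 + s2) with Y.
    unfold macro_slope, small_slope.
    replace (pM X / X * X) with (pM X) by (field; lra).
    replace (lam * pS Y / Y * Y) with (lam * pS Y) by (field; lra).
    nra.
Qed.

Lemma strictly_segmented_SP1_ratio B1 B2 B1S0 B2S0 m1 s1 m2 s2 :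
  NE B1 B2 B1S0 B2S0 m1 s1 m2 s2 -> 0 < B1 -> 0 <= B1S0 -> 0 <= B2S0 ->
  Nm * B1S0 <= Nf_eff * (B1 - B1S0) -> B2S0 < s2 -> 0 < m2 ->
  Nf * ((m1 + m2) * R0) < Nm * (lam * (s1 + s2) * R0) ->
  macro_marginal m2 s2 (m1 + m2) (s1 + s2) = 0 ->
  0 < m1 /\ Nm * s1 <= Nf_eff * m1.
Proof.
  intros HNE HB1 H10 H20 Hratio1 Hslack2 Hm2p Hstrict E2.
  pose proof HNE as [F1 [_ [BR1 _]]]. pose proof F1 as [Hm1 [Hs1 _]].
  assert (HX : 0 < m1 + m2) by lra.
  assert (HY : 0 < s1 + s2) by lra.
  assert (Hseg : segmented (m1 + m2) (s1 + s2)) by (unfold segmented; lra).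
  pose proof Nf_eff_pos.
  destruct (Rle_lt_or_eq_dec _ _ Hs1) as [Hslack1 | <-].
  - destruct (NE_macro_marginals_ge0 _ _ _ _ _ _ _ _ HNE H10 H20 HY Hseg) as [FOC1 _].
    pose proof (best_response_macro_marginal_le0 _ _ _ _ _ _ BR1 F1 H10 ltac:(lra)
                  Hslack1 HX Hstrict) as SLACK1.
    set (X := m1 + m2) in *. set (Y := s1 + s2) in *.
    destruct (segmented_marginal_balance a (macro_slope X) (small_slope Y) m1 s1 m2 s2 Ha
                (macro_slope_pos X HX) (small_slope_pos Y HY) Hm1 ltac:(lra) Hm2p
                FOC1 SLACK1 E2) as [Hm1p [Hshare HbalX]].
    change (m1 * Y = s1 * X) in Hshare.
    assert (Hprices : pM X = lam * pS Y).
    { replace (pM X) with (macro_slope X * X) by (unfold macro_slope; field; lra).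
      replace (lam * pS Y) with (small_slope Y * Y) by (unfold small_slope; field; lra).
      exact HbalX. }
    pose proof (balanced_prices_ratio X Y HX HY Hprices) as HNmY.
    split; [exact Hm1p|].
    apply Req_le, Rmult_eq_reg_r with X; [|lra].
    replace (Nm * s1 * X) with (Nm * (s1 * X)) by ring. rewrite <- Hshare.
    replace (Nm * (m1 * Y)) with (m1 * (Nm * Y)) by ring. rewrite HNmY. ring.
  - pose proof (best_response_segmented_full _ _ _ _ _ _ BR1 F1 H10 ltac:(lra) Hseg) as Hfull.
    assert (Hm1p : 0 < m1).
    { apply Rnot_le_lt; intro Hm10.
      assert (Nf_eff * (B1 - B1S0) <= Nf_eff * 0) by (apply Rmult_le_compat_l; lra).
      assert (0 < Nm * B1S0) by (apply Rmult_lt_0_compat; lra).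
      lra. }
    split; [exact Hm1p|]. replace m1 with (B1 - B1S0) by lra. exact Hratio1.
Qed.

Lemma strictly_segmented_not_NE B1 B2 B1S0 B2S0 m1 s1 m2 s2 :
  NE B1 B2 B1S0 B2S0 m1 s1 m2 s2 -> 0 < B1 -> 0 <= B1S0 -> 0 <= B2S0 ->
  Nm * B1S0 <= Nf_eff * (B1 - B1S0) -> B2S0 < s2 -> Nf_eff * m2 < Nm * s2 ->
  0 < m1 + m2 -> Nf * ((m1 + m2) * R0) < Nm * (lam * (s1 + s2) * R0) -> False.
Proof.
  intros HNE HB1 H10 H20 Hratio1 Hslack2 Hratio2 HX Hstrict.
  pose proof HNE as [F1 [F2 [_ BR2]]].
  pose proof F1 as [Hm1 [Hs1 _]]. pose proof F2 as [Hm2 _].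
  assert (HY : 0 < s1 + s2) by lra.
  destruct (NE_macro_marginals_ge0 _ _ _ _ _ _ _ _ HNE H10 H20 HY
              ltac:(unfold segmented; lra)) as [FOC1 FOC2].
  assert (SLACK2 : macro_marginal m2 s2 (m1 + m2) (s1 + s2) <= 0).
  { rewrite (Rplus_comm m1), (Rplus_comm s1) in *.
    exact (best_response_macro_marginal_le0 _ _ _ _ _ _ BR2 F2 H20 ltac:(lra) Hslack2 HX
             Hstrict). }
  set (u := macro_slope (m1 + m2)). set (v := small_slope (s1 + s2)).
  assert (Hu : 0 < u) by exact (macro_slope_pos _ HX).
  assert (Hv : 0 < v) by exact (small_slope_pos _ HY).
  destruct (segmented_marginal_signs a u v m1 s1 m2 s2 Ha Hu Hv Hm1 ltac:(lra) Hm2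
              ltac:(lra) HX FOC1 FOC2 SLACK2) as [Hm2p [HA HZ]].
  destruct (strictly_segmented_SP1_ratio _ _ _ _ _ _ _ _ HNE HB1 H10 H20 Hratio1 Hslack2
              Hm2p Hstrict (Rle_antisym _ _ SLACK2 (FOC2 Hm2p))) as [Hm1p Hratio1'].
  pose proof Nf_eff_pos.
  assert (Nf_eff * v * m2 < Nm * u * m2) by nra.
  assert (Nm * u * m1 <= Nf_eff * v * m1) by nra.
  assert (Nf_eff * v < Nm * u) by nra.
  nra.
Qed.

Lemma slack_SP2_not_NE B1 B2 B1S0 B2S0 m1 s1 m2 s2 :
  NE B1 B2 B1S0 B2S0 m1 s1 m2 s2 -> 0 < B1 -> 0 <= B1S0 -> 0 <= B2S0 ->
  B1S0 <= BS_NE Nm Nf lam a B1 -> BS_NE Nm Nf lam a B2 < B2S0 -> B2S0 < s2 -> False.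
Proof.
  intros HNE HB1 H10 H20 Hviol1 Hviol2 Hslack2.
  pose proof HNE as [[Hm1 [Hs1 _]] [[Hm2 [_ HB2]] [_ BR2]]].
  pose proof (le_BS_NE_ratio _ _ Hviol1) as Hratio1.
  assert (Hratio2 : Nf_eff * m2 < Nm * s2).
  { pose proof (BS_NE_lt_ratio _ _ Hviol2). pose proof Nf_eff_pos.
    assert (Nf_eff * m2 <= Nf_eff * (B2 - B2S0)) by (apply Rmult_le_compat_l; lra).
    assert (Nm * B2S0 < Nm * s2) by (apply Rmult_lt_compat_l; lra).
    lra. }
  destruct (Rle_dec (Nf * ((m1 + m2) * R0)) (Nm * (lam * (s1 + s2) * R0))) as [Hseg | Hpool];
    [| exact (pooled_not_NE _ _ _ _ _ _ _ _ HNE H10 H20 Hpool)].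
  destruct (Rle_lt_or_eq_dec 0 (m1 + m2)) as [HX | HX0]; [lra | |].
  - destruct (Rle_lt_or_eq_dec _ _ Hseg) as [Hstrict | Hbd].
    + exact (strictly_segmented_not_NE _ _ _ _ _ _ _ _ HNE HB1 H10 H20 Hratio1 Hslack2
               Hratio2 HX Hstrict).
    + exact (segmented_boundary_not_NE _ _ _ _ _ _ _ _ HNE H10 H20 HX Hbd).
  - replace m1 with 0 in BR2 by lra. replace m2 with 0 in BR2 by lra.
    apply (best_response_without_macro_absurd B2 B2S0 s2 s1 BR2); try lra.
    unfold feasible; lra.
Qed.
End BandwidthGame.

Theorem proposition2
  (Nm Nf lam alpha R0 B1 B2 B1S0 B2S0 : R)
  (HNm : 0 < Nm) (HNf : 0 < Nf) (Hlam : 1 < lam)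
  (Halpha0 : 0 < alpha) (Halpha1 : alpha < 1) (HR0 : 0 < R0)
  (HB1 : 0 < B1) (HB2 : 0 < B2)
  (HB1S0 : 0 <= B1S0 <= B1) (HB2S0 : 0 <= B2S0 <= B2)
  (Hviol1 : B1S0 <= BS_NE Nm Nf lam alpha B1)
  (Hviol2 : BS_NE Nm Nf lam alpha B2 < B2S0)
  (B1M B1S B2M B2S : R)
  (HNE : constrained_NE Nm Nf lam alpha R0 B1 B2 B1S0 B2S0 B1M B1S B2M B2S) :
  (B1S = B1S0 /\ B2S = B2S0) \/ (B1S0 < B1S /\ B2S = B2S0).
Proof.
  pose proof HNE as [[_ [HB1S _]] [[_ [HB2S _]] _]].
  assert (HB2S_eq : B2S = B2S0).
  { apply Rle_antisym; [|exact HB2S]. apply Rnot_lt_le; intro Hslack2.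
    exact (slack_SP2_not_NE Nm Nf lam alpha R0 HNm HNf Hlam (conj Halpha0 Halpha1) HR0
             _ _ _ _ _ _ _ _ HNE HB1 (proj1 HB1S0) (proj1 HB2S0) Hviol1 Hviol2 Hslack2). }
  destruct (Rle_lt_or_eq_dec _ _ HB1S) as [HB1S_gt | HB1S_eq].
  - right. split; assumption.
  - left. split; [symmetry |]; assumption.
Qed.
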